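(* Let $\mathcal N_1\in ISDnet(m,n,1)$, $c_1\ge0$, $y_0\in\mathbb{R}^n$, $t_0\in\mathbb{R}$, and $s_0<s_1<s_2<s_{\mathrm{final}}$. Then there exist $\mathcal N_2\in ISDnet(m,n,1)$ and $c_2\ge0$ such that for all $x\in\mathbb{R}^m$, $\mathrm{ODESolve}(\mathcal N_1,c_1,x,(y_0,t_0,s_0),s_{\mathrm{final}}) = \mathrm{ODESolve}(\mathcal N_2,c_2,x,(y_0,t_0,s_0),s_{\mathrm{final}})$, and the vector part $b_2$ of $\mathcal N_2$ satisfies $b_2(x,y,t,s)=0$ whenever $s\notin[s_1,s_2]$.
   Context: $ISD(D)$ is the smallest set of functions $D\to\mathbb{R}$ containing all restrictions of real polynomials and closed under pointwise $\min$, $\max$; vector/matrix maps are ISD if all entries are. $ISDnet(m,n,1) := ISD(\mathbb{R}^m\times\mathbb{R}^{n+1}\times\mathbb{R},\ \mathbb{R}^{(n+1)\times(n+1)}\times\mathbb{R}^{n+1})$; for $\mathcal N_j$ in it write $\mathcal N_j(x,y,t,s)=(M_j(x,y,t,s),b_j(x,y,t,s))$ with $y\in\mathbb{R}^n,t\in\mathbb{R},s\in\mathbb{R}$. $\mathrm{clamp\text{-}sol}_c(M,b):=\mathrm{clamp}(M^{-1}b,-c,c)$ (componentwise $a_i\mapsto\min(\max(a_i,-c),c)$) if $M$ is invertible, and $0$ otherwise. $\mathrm{ODESolve}(\mathcal N,c,x,(y_0,t_0,s_0),s_{\mathrm{final}})$ denotes $(y(s_{\mathrm{final}}),t(s_{\mathrm{final}}))$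 where $(y,t)$ is the exact solution of $\frac{d}{ds}(y,t)=\mathrm{clamp\text{-}sol}_c\big(M(x,y,t,s),b(x,y,t,s)\big)$ with $(y,t)(s_0)=(y_0,t_0)$. *)

From mathcomp Require Import all_boot all_order all_algebra.
From mathcomp Require Import all_classical all_reals all_analysis.
Set Implicit Arguments. Unset Strict Implicit. Unset Printing Implicit Defensive.
Import Order.TTheory GRing.Theory Num.Theory.
Import numFieldNormedType.Exports.
Local Open Scope ring_scope.
Local Open Scope classical_set_scope.

Section ISD.
Variable R : realType.

(* Polynomial functions D -> R, where D is described by coordinate functions
   coord : I -> D -> R : the smallest class containing constants and the
   coordinates, closed under + and * (= restrictions of real polynomials). *)
Inductive poly_fun (D I : Type) (coord : I -> D -> R) : (D -> R) -> Prop :=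
| PF_const (c : R) : poly_fun coord (fun _ => c)
| PF_coord (i : I) : poly_fun coord (coord i)
| PF_add f g : poly_fun coord f -> poly_fun coord g ->
    poly_fun coord (fun z => f z + g z)
| PF_mul f g : poly_fun coord f -> poly_fun coord g ->
    poly_fun coord (fun z => f z * g z).

Inductive isd_fun (D I : Type) (coord : I -> D -> R) : (D -> R) -> Prop :=
| ISD_poly f : poly_fun coord f -> isd_fun coord f
| ISD_min f g : isd_fun coord f -> isd_fun coord g ->
    isd_fun coord (fun z => Num.min (f z) (g z))
| ISD_max f g : isd_fun coord f -> isd_fun coord g ->
    isd_fun coord (fun z => Num.max (f z) (g z)).

(* The domain R^m x R^(n+1) x R: x, the state (y,t) (last entry is t), s. *)
Definition net_dom (m n : nat) := ('cV[R]_m * 'cV[R]_(n + 1) * R)%type.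

Definition net_coord (m n : nat) (k : 'I_m + 'I_(n + 1) + unit)
  (z : net_dom m n) : R :=
  match k with
  | inl (inl i) => z.1.1 i 0
  | inl (inr j) => z.1.2 j 0
  | inr _ => z.2
  end.

Definition net (m n : nat) :=
  'cV[R]_m -> 'cV[R]_(n + 1) -> R -> 'M[R]_(n + 1) * 'cV[R]_(n + 1).

Definition ISDnet (m n : nat) (N : net m n) : Prop :=
  (forall i j : 'I_(n + 1),
     isd_fun (@net_coord m n) (fun z => (N z.1.1 z.1.2 z.2).1 i j)) /\
  (forall i : 'I_(n + 1),
     isd_fun (@net_coord m n) (fun z => (N z.1.1 z.1.2 z.2).2 i 0)).

Definition clamp (c a : R) : R := Num.min (Num.max a (- c)) c.

Definition clamp_sol (k : nat) (c : R) (M : 'M[R]_k) (b : 'cV[R]_k) : 'cV[R]_k :=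
  if M \in unitmx then map_mx (clamp c) (invmx M *m b) else 0.

Definition ode_sol (m n : nat) (N : net m n) (c : R) (x : 'cV[R]_m)
  (z0 : 'cV[R]_(n + 1)) (s0 sf : R) (z : R -> 'cV[R]_(n + 1)) : Prop :=
  z s0 = z0 /\
  (forall i : 'I_(n + 1), {within [set s : R | s0 <= s <= sf], continuous (fun s : R => z s i 0)}) /\
  (forall s : R, s0 < s < sf -> forall i : 'I_(n + 1),
     is_derive s 1 (fun u => z u i 0)
       (clamp_sol c (N x (z s) s).1 (N x (z s) s).2 i 0)).

(* ODESolve(N, c, x, (z0, s0), sf): the set of values at sf of exact
   solutions (a singleton when the exact solution exists and is unique). *)
Definition ODESolve (m n : nat) (N : net m n) (c : R) (x : 'cV[R]_m)
  (z0 : 'cV[R]_(n + 1)) (s0 sf : R) : set 'cV[R]_(n + 1) :=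
  [set v | exists z, ode_sol N c x z0 s0 sf z /\ z sf = v].

End ISD.

(* Reparametrize time by the cubic [warp], an increasing bijection of
   [[s1, s2]] onto [[s0, sf]] whose derivative [g] vanishes at both ends,
   extended by constants outside [[s1, s2]].  A solution [z] of the original
   equation gives the solution [z \o warp] of [w' = g(s) F(w, warp s)], whose
   velocity is zero outside [[s1, s2]], and [w \o warp^-1] undoes this; the
   composite is differentiable at [s1] and [s2] because [warp] is flat to
   second order there while [z] is Lipschitz.  To stay inside ISD nets,
   [g(s) clamp_c (M^-1 b)] is produced as the solution of the scalar system
   [det M * y = g(s) clamp_{c |det M|} (adj M b)]: determinants, adjugates
   and products of ISD functions are ISD. *)

From mathcomp Require Import all_boot all_order all_algebra.
From mathcomp Require Import all_classical all_reals all_analysis.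
From mathcomp Require Import ring lra.
Import Order.TTheory GRing.Theory Num.Theory.
Import numFieldNormedType.Exports.
Local Open Scope ring_scope.
Local Open Scope classical_set_scope.

Ltac minmax_free x := lazymatch x with
  | context [Num.min _ _] => fail
  | context [Num.max _ _] => fail
  | _ => idtac end.

Ltac case_minmax := repeat match goal with
  | |- context [Num.min ?x ?y] =>
      minmax_free x; minmax_free y; case: (leP x y) => ?
  | |- context [Num.max ?x ?y] =>
      minmax_free x; minmax_free y; case: (leP x y) => ? end.

Section PositivePart.
Context {R : realDomainType}.
Implicit Types a b c x y : R.

Lemma maxr0_maxM a b c : 0 <= c ->
  Num.max (Num.max a b) 0 * c = Num.max (Num.max a 0 * c) (Num.max b 0 * c).
Proof. by move=> c0; rewrite -maxr_pMl //; congr (_ * _); case_minmax; lra. Qed.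

Lemma maxr0_minM a b c : 0 <= c ->
  Num.max (Num.min a b) 0 * c = Num.min (Num.max a 0 * c) (Num.max b 0 * c).
Proof. by move=> c0; rewrite -minr_pMl //; congr (_ * _); case_minmax; lra. Qed.

Lemma mulr_pos_neg_parts x y :
  x * y = Num.max x 0 * Num.max y 0 - Num.max x 0 * Num.max (- y) 0
          - Num.max (- x) 0 * Num.max y 0 + Num.max (- x) 0 * Num.max (- y) 0.
Proof.
have parts a : a = Num.max a 0 - Num.max (- a) 0 by case_minmax; lra.
by rewrite {1}(parts x) {1}(parts y); ring.
Qed.

Lemma ler_mul_cubes a b : 0 <= a -> 0 <= b -> a * b <= a + b + a ^+ 3 + b ^+ 3.
Proof.
move=> a0 b0.
have a2 : a ^+ 2 <= a + a ^+ 3 by nra.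
have b2 : b ^+ 2 <= b + b ^+ 3 by nra.
have ab2 : 2 * (a * b) <= a ^+ 2 + b ^+ 2.
  by have := sqr_ge0 (a - b); rewrite sqrrB; lra.
have a3 : 0 <= a ^+ 3 by exact: exprn_ge0.
have b3 : 0 <= b ^+ 3 by exact: exprn_ge0.
lra.
Qed.

(* The second argument of the [min] is [>= x * y] when [x, y > 0] and [<= 0]
   when [x, y <= 0], which is all that is needed. *)
Lemma maxr0_mul_minmax x y :
  Num.max x 0 * Num.max y 0 =
  Num.max 0 (Num.min (x * y) (x + y + x ^+ 3 + y ^+ 3)).
Proof.
have odd3 a : (- a) ^+ 3 = - a ^+ 3 by rewrite exprNn; ring.
case: (leP x 0) => x0; case: (leP y 0) => y0.
- have : (- x) * (- y) <= - x + - y + (- x) ^+ 3 + (- y) ^+ 3.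
    by apply: ler_mul_cubes; rewrite oppr_ge0.
  by rewrite odd3 odd3 mulrNN mul0r; case_minmax; lra.
- by rewrite mul0r; case_minmax; nra.
- by rewrite mulr0; case_minmax; nra.
- by have := @ler_mul_cubes x y (ltW x0) (ltW y0); case_minmax; nra.
Qed.

End PositivePart.

Section ISDClosure.
Context {R : realType} {D I : Type} {coord : I -> D -> R}.
Local Notation poly := (poly_fun coord).
Local Notation isd := (isd_fun coord).
Implicit Types f g p q : D -> R.

Lemma poly_fun_eq {f g} : poly f -> f =1 g -> poly g.
Proof. by move=> pf /funext <-. Qed.

Lemma isd_fun_eq {f g} : isd f -> f =1 g -> isd g.
Proof. by move=> If /funext <-. Qed.

Lemma isd_const c : isd (fun _ => c).
Proof. exact/ISD_poly/PF_const. Qed.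

Lemma poly_opp {p} : poly p -> poly (fun z => - p z).
Proof.
move=> pp; apply: (poly_fun_eq (PF_mul (PF_const coord (-1)) pp)) => z.
exact: mulN1r.
Qed.

Lemma poly_exp {p} n : poly p -> poly (fun z => p z ^+ n).
Proof.
move=> pp; elim: n => [|n IH].
  by apply: poly_fun_eq (PF_const coord 1) _ => z; rewrite expr0.
by apply: poly_fun_eq (PF_mul pp IH) _ => z; rewrite exprS.
Qed.

Lemma isd_opp {f} : isd f -> isd (fun z => - f z).
Proof.
elim=> {f} [f pf|f g _ If _ Ig|f g _ If _ Ig].
- exact/ISD_poly/poly_opp.
- by apply: isd_fun_eq (ISD_max If Ig) _ => z; case_minmax; lra.
- by apply: isd_fun_eq (ISD_min If Ig) _ => z; case_minmax; lra.
Qed.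

Lemma isd_add_poly {p g} : poly p -> isd g -> isd (fun z => p z + g z).
Proof.
move=> pp; elim=> {g} [g pg|g h _ Ig _ Ih|g h _ Ig _ Ih].
- exact/ISD_poly/PF_add.
- by apply: isd_fun_eq (ISD_min Ig Ih) _ => z; case_minmax; lra.
- by apply: isd_fun_eq (ISD_max Ig Ih) _ => z; case_minmax; lra.
Qed.

Lemma isd_add {f g} : isd f -> isd g -> isd (fun z => f z + g z).
Proof.
move=> If; elim: If g => {f} [f pf|f h _ If _ Ih|f h _ If _ Ih] g Ig.
- exact: isd_add_poly.
- by apply: isd_fun_eq (ISD_min (If g Ig) (Ih g Ig)) _ => z; case_minmax; lra.
- by apply: isd_fun_eq (ISD_max (If g Ig) (Ih g Ig)) _ => z; case_minmax; lra.
Qed.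

Lemma isd_sub {f g} : isd f -> isd g -> isd (fun z => f z - g z).
Proof. by move=> If Ig; apply/isd_add/isd_opp. Qed.

Lemma isd_maxr0_mul_poly {p q} :
  poly p -> poly q -> isd (fun z => Num.max (p z) 0 * Num.max (q z) 0).
Proof.
move=> pp pq; rewrite (funext (fun z => maxr0_mul_minmax (p z) (q z))).
apply/ISD_max/ISD_min; [exact: isd_const | exact/ISD_poly/PF_mul |].
by apply: ISD_poly; repeat apply: PF_add => //; exact: poly_exp.
Qed.

Lemma isd_maxr0_mul_polyl {p g} :
  poly p -> isd g -> isd (fun z => Num.max (p z) 0 * Num.max (g z) 0).
Proof.
move=> pp; elim=> {g} [g pg|g h _ Ig _ Ih|g h _ Ig _ Ih].
- exact: isd_maxr0_mul_poly.
- apply: isd_fun_eq (ISD_min Ig Ih) _ => z.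
  by rewrite ![Num.max (p z) 0 * _]mulrC maxr0_minM // le_max lexx orbT.
- apply: isd_fun_eq (ISD_max Ig Ih) _ => z.
  by rewrite ![Num.max (p z) 0 * _]mulrC maxr0_maxM // le_max lexx orbT.
Qed.

Lemma isd_maxr0_mul {f g} :
  isd f -> isd g -> isd (fun z => Num.max (f z) 0 * Num.max (g z) 0).
Proof.
move=> If Ig; elim: If => {f} [f pf|f h _ If _ Ih|f h _ If _ Ih].
- exact: isd_maxr0_mul_polyl.
- apply: isd_fun_eq (ISD_min If Ih) _ => z.
  by rewrite maxr0_minM // le_max lexx orbT.
- apply: isd_fun_eq (ISD_max If Ih) _ => z.
  by rewrite maxr0_maxM // le_max lexx orbT.
Qed.

Lemma isd_mul {f g} : isd f -> isd g -> isd (fun z => f z * g z).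
Proof.
move=> If Ig; have Nf := isd_opp If; have Ng := isd_opp Ig.
apply: isd_fun_eq (fun z => esym (mulr_pos_neg_parts (f z) (g z))).
apply: isd_add; first apply: isd_sub; first apply: isd_sub.
all: by apply: isd_maxr0_mul.
Qed.

Lemma isd_norm {f} : isd f -> isd (fun z => `|f z|).
Proof.
by move=> If; apply: isd_fun_eq (ISD_max If (isd_opp If)) _ => z; rewrite maxrN.
Qed.

Lemma isd_clamp {c a} : isd c -> isd a -> isd (fun z => clamp (c z) (a z)).
Proof. by move=> Ic Ia; apply/ISD_min/Ic/ISD_max/isd_opp. Qed.

Lemma isd_sum (T : Type) (r : seq T) (P : pred T) (F : T -> D -> R) :
  (forall i, P i -> isd (F i)) -> isd (fun z => \sum_(i <- r | P i) F i z).
Proof.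
move=> IF; elim: r => [|a r IH].
  by apply: isd_fun_eq (isd_const _) _ => z; rewrite big_nil.
case Pa: (P a); last by apply: isd_fun_eq IH _ => z; rewrite big_cons Pa.
by apply: isd_fun_eq (isd_add (IF a Pa) IH) _ => z; rewrite big_cons Pa.
Qed.

Lemma isd_prod (T : Type) (r : seq T) (P : pred T) (F : T -> D -> R) :
  (forall i, P i -> isd (F i)) -> isd (fun z => \prod_(i <- r | P i) F i z).
Proof.
move=> IF; elim: r => [|a r IH].
  by apply: isd_fun_eq (isd_const _) _ => z; rewrite big_nil.
case Pa: (P a); last by apply: isd_fun_eq IH _ => z; rewrite big_cons Pa.
by apply: isd_fun_eq (isd_mul (IF a Pa) IH) _ => z; rewrite big_cons Pa.
Qed.

Section Substitution.
Context {h : D -> D}.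
Hypothesis poly_coord_h : forall i, poly (fun z => coord i (h z)).

Lemma poly_fun_comp {p} : poly p -> poly (fun z => p (h z)).
Proof.
by elim=> *; [exact: PF_const | exact: poly_coord_h | exact: PF_add | exact: PF_mul].
Qed.

Lemma isd_fun_comp {f} : isd f -> isd (fun z => f (h z)).
Proof.
by elim=> *; [exact/ISD_poly/poly_fun_comp | exact: ISD_min | exact: ISD_max].
Qed.

End Substitution.

Definition isd_mx {k l} (A : D -> 'M[R]_(k, l)) :=
  forall i j, isd (fun z => A z i j).

Lemma isd_det {k} {A : D -> 'M[R]_k} : isd_mx A -> isd (fun z => \det (A z)).
Proof.
move=> IA; apply: isd_sum => s _; apply/isd_mul; first exact: isd_const.
by apply: isd_prod => i _; exact: IA.
Qed.

Lemma isd_mx_adj {k} {A : D -> 'M[R]_k} : isd_mx A -> isd_mx (fun z => \adj (A z)).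
Proof.
move=> IA i j; apply: isd_fun_eq (fun z => esym (mxE _ _ _ _)).
apply/isd_mul; first exact: isd_const.
apply: isd_det => a b.
by apply: isd_fun_eq (IA (lift j a) (lift i b)) _ => z; rewrite !mxE.
Qed.

Lemma isd_mx_mul {k l r} {A : D -> 'M[R]_(k, l)} {B : D -> 'M[R]_(l, r)} :
  isd_mx A -> isd_mx B -> isd_mx (fun z => A z *m B z).
Proof.
move=> IA IB i j; apply: isd_fun_eq (fun z => esym (mxE _ _ _ _)).
by apply: isd_sum => t _; apply: isd_mul.
Qed.

Lemma isd_mx_scalar {k} {d : D -> R} : isd d -> isd_mx (fun z => ((d z)%:M : 'M[R]_k)).
Proof.
move=> Id i j; case: (eqVneq i j) => [->|ij].
  by apply: isd_fun_eq Id _ => z; rewrite mxE eqxx mulr1n.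
by apply: isd_fun_eq (isd_const 0) _ => z; rewrite mxE (negbTE ij) mulr0n.
Qed.

End ISDClosure.

Arguments isd_mx {R D I} coord {k l} A.

Section Clamp.
Context {R : realType}.
Implicit Types a c d v : R.

Lemma clamp_bound c a : 0 <= c -> `|clamp c a| <= c.
Proof. by move=> c0; rewrite /clamp ler_norml; case_minmax; lra. Qed.

Lemma clamp_id c a : `|a| <= c -> clamp c a = a.
Proof. by rewrite /clamp ler_norml => /andP[? ?]; case_minmax; lra. Qed.

Lemma clamp_mul d c v : 0 <= c -> clamp (`|d| * c) (d * v) = d * clamp c v.
Proof.
move=> c0; rewrite /clamp; case: (leP 0 d) => d0.
  by rewrite ger0_norm //; case_minmax; nra.
by rewrite ltr0_norm //; case_minmax; nra.
Qed.

Lemma clamp_sol_bound k c (M : 'M[R]_k) b i j :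
  0 <= c -> `|clamp_sol c M b i j| <= c.
Proof.
move=> c0; rewrite /clamp_sol; case: ifP => _; last by rewrite mxE normr0.
by rewrite mxE; apply: clamp_bound.
Qed.

Definition scaled_adj_rhs {k} c g (M : 'M[R]_k) (b : 'cV[R]_k) : 'cV[R]_k :=
  g *: map_mx (clamp (c * `|\det M|)) (\adj M *m b).

(* Since [adj M = det M * M^-1] and [clamp] is homogeneous ([clamp_mul]),
   dividing by [det M] turns the clamp at [c |det M|] of [adj M *m b] into the
   clamp at [c] of [M^-1 b]; the factor [g <= K] keeps it inside the outer
   bound [c * K]. *)
Lemma clamp_sol_scaled_adj k c K g (M : 'M[R]_k) (b : 'cV[R]_k) :
  0 <= c -> 0 <= g <= K ->
  clamp_sol (c * K) (\det M)%:M (scaled_adj_rhs c g M b) = g *: clamp_sol c M b.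
Proof.
case: k M b => [|k] M b c0 /andP[g0 gK]; first by apply/matrixP => -[].
rewrite /clamp_sol.
have -> : (((\det M)%:M : 'M[R]_k.+1) \in unitmx) = (M \in unitmx).
  by rewrite !unitmxE det_scalar !unitfE expf_eq0.
case: ifP => Mu; last by rewrite scaler0.
have d0 : \det M != 0 by rewrite -unitfE -unitmxE.
have entry u : clamp (c * K) ((\det M)^-1 * (g * clamp (c * `|\det M|) u)) =
    g * clamp c ((\det M)^-1 * u).
  rewrite -{1}(mulVKf d0 u) [c * `|_|]mulrC clamp_mul // mulrCA mulKf //.
  apply: clamp_id; rewrite normrM (ger0_norm g0) mulrC.
  by apply: ler_pM => //; exact: clamp_bound.
rewrite invmx_scalar mul_scalar_mx /invmx Mu -scalemxAl.
by apply/matrixP => i j; rewrite !mxE; exact: entry.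
Qed.

End Clamp.

Section TimeChange.
Context {R : realType}.
Variables s0 s1 s2 sf : R.
Implicit Types a b h s u : R.

Definition warp_rate : R := 6 * (sf - s0) / (s2 - s1) ^+ 3.

(* [warp] is the cubic with [warp s1 = s0], [warp s2 = sf] whose derivative
   [warp_rate * (s - s1) * (s2 - s)] vanishes at [s1] and [s2]. *)
Definition warp (s : R) : R :=
  s0 + warp_rate * ((s2 - s1) * (s - s1) ^+ 2 / 2 - (s - s1) ^+ 3 / 3).

Definition warp_speed (s : R) : R :=
  Num.max 0 (warp_rate * ((s - s1) * (s2 - s))).

Definition warp_ext (s : R) : R := warp (Num.min (Num.max s s1) s2).

Definition warp_inv (u : R) : R :=
  xget s1 [set s | s1 <= s <= s2 /\ warp s = u].

Lemma is_derive_warp s : is_derive s 1 warp (warp_rate * ((s - s1) * (s2 - s))).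
Proof. by apply: is_derive_eq; rewrite /GRing.scale /=; field. Qed.

Lemma continuous_warp : continuous warp.
Proof.
move=> s; have [dw _] := is_derive_warp s.
exact/differentiable_continuous/derivable1_diffP.
Qed.

Lemma warp_s1 : warp s1 = s0.
Proof. by rewrite /warp subrr !expr0n /=; ring. Qed.

Hypotheses (s0_lt_sf : s0 < sf) (s1_lt_s2 : s1 < s2).

Lemma warp_rate_gt0 : 0 < warp_rate.
Proof. by rewrite divr_gt0 ?mulr_gt0 ?exprn_gt0 ?subr_gt0. Qed.

Lemma warp_s2 : warp s2 = sf.
Proof. by rewrite /warp /warp_rate; field; rewrite subr_eq0 gt_eqF. Qed.

Lemma warp_lt {a b} : s1 <= a -> a < b -> b <= s2 -> warp a < warp b.
Proof.
move=> s1a ab bs2; rewrite /warp ltrD2l ltr_pM2l ?warp_rate_gt0 // -subr_gt0.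
set L := s2 - s1; set x := a - s1; set y := b - s1.
have -> : L * y ^+ 2 / 2 - y ^+ 3 / 3 - (L * x ^+ 2 / 2 - x ^+ 3 / 3) =
    (y - x) * (3 * L * (x + y) - 2 * (x ^+ 2 + x * y + y ^+ 2)) / 6 by field.
rewrite divr_gt0 // mulr_gt0 //; rewrite /L /x /y; first by lra.
by nra.
Qed.

Lemma warp_le {a b} : s1 <= a -> a <= b -> b <= s2 -> warp a <= warp b.
Proof.
move=> s1a; rewrite le_eqVlt => /predU1P[-> // | ab] bs2.
exact/ltW/warp_lt.
Qed.

Lemma warp_itvoo s : s1 < s < s2 -> s0 < warp s < sf.
Proof.
move=> /andP[s1s ss2].
have := warp_lt (lexx s1) s1s (ltW ss2); have := warp_lt (ltW s1s) ss2 (lexx s2).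
by rewrite warp_s1 warp_s2 => -> ->.
Qed.

Lemma warp_inj a b : s1 <= a <= s2 -> s1 <= b <= s2 -> warp a = warp b -> a = b.
Proof.
move=> /andP[s1a as2] /andP[s1b bs2] e.
case: (ltgtP a b) => // ab; first by have := warp_lt s1a ab bs2; rewrite e ltxx.
by have := warp_lt s1b ab as2; rewrite e ltxx.
Qed.

Lemma warp_speed_ge0 s : 0 <= warp_speed s.
Proof. by rewrite le_max lexx. Qed.

Lemma warp_speed_le s : warp_speed s <= warp_rate * (s2 - s1) ^+ 2.
Proof.
have k0 := warp_rate_gt0; rewrite ge_max mulr_ge0 ?sqr_ge0 ?(ltW k0) //= ler_pM2l //.
rewrite -subr_ge0.
have -> : (s2 - s1) ^+ 2 - (s - s1) * (s2 - s) =
    (s - (s1 + s2) / 2) ^+ 2 + 3 / 4 * (s2 - s1) ^+ 2 by field.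
by rewrite addr_ge0 ?sqr_ge0 // mulr_ge0 ?sqr_ge0.
Qed.

Lemma warp_speed_out s : ~ (s1 < s < s2) -> warp_speed s = 0.
Proof.
move=> s_out; apply/max_idPl; rewrite pmulr_rle0 ?warp_rate_gt0 //.
case: (leP s s1) => s1s.
  by rewrite mulr_le0_ge0 ?subr_le0 ?subr_ge0 // ltW // (le_lt_trans s1s).
have s2s : s2 <= s by rewrite leNgt; apply: contra_notN s_out => ss2; rewrite s1s.
by rewrite mulr_ge0_le0 ?subr_le0 ?subr_ge0 // ltW // (lt_le_trans s1_lt_s2).
Qed.

Lemma warp_speed_in s : s1 < s < s2 ->
  warp_speed s = warp_rate * ((s - s1) * (s2 - s)).
Proof.
move=> /andP[s1s ss2]; apply/max_idPr/mulr_ge0; first exact/ltW/warp_rate_gt0.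
by apply: mulr_ge0; rewrite subr_ge0 ltW.
Qed.

Lemma warp_ext_lo {s} : s <= s1 -> warp_ext s = s0.
Proof.
by move=> ss1; rewrite /warp_ext (max_idPr ss1) (min_idPl (ltW s1_lt_s2)) warp_s1.
Qed.

Lemma warp_ext_hi {s} : s2 <= s -> warp_ext s = sf.
Proof.
move=> s2s; have s1s : s1 <= s by rewrite (le_trans (ltW s1_lt_s2)).
by rewrite /warp_ext (max_idPl s1s) (min_idPr s2s) warp_s2.
Qed.

Lemma warp_ext_mid {s} : s1 <= s <= s2 -> warp_ext s = warp s.
Proof. by move=> /andP[s1s ss2]; rewrite /warp_ext (max_idPl s1s) (min_idPl ss2). Qed.

Lemma warp_ext_range s : s0 <= warp_ext s <= sf.
Proof.
rewrite /warp_ext; set c := Num.min _ s2.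
have s1c : s1 <= c by rewrite le_min le_max lexx (ltW s1_lt_s2) orbT.
have cs2 : c <= s2 by rewrite ge_min lexx orbT.
rewrite -{1}warp_s1 -warp_s2.
by rewrite (warp_le (lexx s1) s1c cs2) (warp_le s1c cs2 (lexx s2)).
Qed.

Lemma continuous_warp_ext : continuous warp_ext.
Proof.
move=> s; apply: (@continuous_comp _ _ _ ((id \max cst s1) \min cst s2) warp).
  apply: continuous_min; last exact: cst_continuous.
  by apply: continuous_max; [exact: cvg_id | exact: cst_continuous].
exact: continuous_warp.
Qed.

Definition warp_flatness : R := warp_rate * (s2 - s1) / 2.

Lemma warp_flatness_ge0 : 0 <= warp_flatness.
Proof. by rewrite divr_ge0 // mulr_ge0 ?subr_ge0 ?ltW ?warp_rate_gt0. Qed.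

Lemma warp_ext_near_s1 h : 0 <= h -> warp_ext (s1 + h) - s0 <= warp_flatness * h ^+ 2.
Proof.
move=> h0; have k0 := warp_rate_gt0.
case: (leP h (s2 - s1)) => hL.
  rewrite warp_ext_mid; last by apply/andP; split; lra.
  rewrite /warp_flatness /warp addrAC subrr add0r [s1 + h]addrC addrK -subr_ge0.
  have -> : warp_rate * (s2 - s1) / 2 * h ^+ 2 -
      warp_rate * ((s2 - s1) * h ^+ 2 / 2 - h ^+ 3 / 3) = warp_rate * (h ^+ 3 / 3).
    by field.
  by apply: mulr_ge0; [exact: ltW | rewrite divr_ge0 ?exprn_ge0].
rewrite warp_ext_hi; last by lra.
have -> : sf - s0 = warp_rate * (s2 - s1) ^+ 3 / 6.
  by rewrite /warp_rate; field; rewrite subr_eq0 gt_eqF.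
have L0 : 0 < s2 - s1 by rewrite subr_gt0.
have L2h2 : (s2 - s1) ^+ 2 <= h ^+ 2 by rewrite !expr2; apply: ler_pM; lra.
have -> : warp_rate * (s2 - s1) ^+ 3 / 6 = warp_flatness * ((s2 - s1) ^+ 2 / 3).
  by rewrite /warp_flatness; field.
rewrite ler_wpM2l ?warp_flatness_ge0 //.
by have := sqr_ge0 (s2 - s1); lra.
Qed.

Lemma warp_ext_near_s2 h : 0 <= h -> sf - warp_ext (s2 - h) <= warp_flatness * h ^+ 2.
Proof.
move=> h0; have k0 := warp_rate_gt0.
case: (leP h (s2 - s1)) => hL.
  rewrite warp_ext_mid; last by apply/andP; split; lra.
  rewrite /warp_flatness -{1}warp_s2 /warp -subr_ge0.
  have -> : warp_rate * (s2 - s1) / 2 * h ^+ 2 - (s0 +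
      warp_rate * ((s2 - s1) * (s2 - s1) ^+ 2 / 2 - (s2 - s1) ^+ 3 / 3) -
      (s0 + warp_rate * ((s2 - s1) * (s2 - h - s1) ^+ 2 / 2 - (s2 - h - s1) ^+ 3 / 3))) =
      warp_rate * (h ^+ 3 / 3) by field.
  by apply: mulr_ge0; [exact: ltW | rewrite divr_ge0 ?exprn_ge0].
rewrite warp_ext_lo; last by lra.
have -> : sf - s0 = warp_rate * (s2 - s1) ^+ 3 / 6.
  by rewrite /warp_rate; field; rewrite subr_eq0 gt_eqF.
have L0 : 0 < s2 - s1 by rewrite subr_gt0.
have L2h2 : (s2 - s1) ^+ 2 <= h ^+ 2 by rewrite !expr2; apply: ler_pM; lra.
have -> : warp_rate * (s2 - s1) ^+ 3 / 6 = warp_flatness * ((s2 - s1) ^+ 2 / 3).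
  by rewrite /warp_flatness; field.
rewrite ler_wpM2l ?warp_flatness_ge0 //.
by have := sqr_ge0 (s2 - s1); lra.
Qed.

Lemma warp_ext_flat s h : ~ (s1 < s < s2) ->
  `|warp_ext (s + h) - warp_ext s| <= warp_flatness * h ^+ 2.
Proof.
move=> s_out; have C0 := warp_flatness_ge0.
have := warp_ext_range (s + h); case: (leP s s1) => ss1.
  rewrite (warp_ext_lo ss1); case: (leP (s + h) s1) => [shs1 _|s1sh /andP[lo _]].
    by rewrite (warp_ext_lo shs1) subrr normr0 mulr_ge0 ?sqr_ge0.
  rewrite ger0_norm ?subr_ge0 //.
  have -> : s + h = s1 + (s + h - s1) by ring.
  apply: le_trans (warp_ext_near_s1 _ _) _; first by lra.
  rewrite ler_wpM2l // ler_sqr ?nnegrE; lra.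
have s2s : s2 <= s by rewrite leNgt; apply: contra_notN s_out => ss2; rewrite ss1.
rewrite (warp_ext_hi s2s); case: (leP s2 (s + h)) => [s2sh _|shs2 /andP[_ hi]].
  by rewrite (warp_ext_hi s2sh) subrr normr0 mulr_ge0 ?sqr_ge0.
rewrite distrC ger0_norm ?subr_ge0 //.
have -> : s + h = s2 - (s2 - (s + h)) by ring.
apply: le_trans (warp_ext_near_s2 _ _) _; first by lra.
rewrite ler_wpM2l // -[h ^+ 2]sqrrN ler_sqr ?nnegrE; lra.
Qed.

Lemma warp_inv_range u : s1 <= warp_inv u <= s2.
Proof. by rewrite /warp_inv; case: xgetP => [x _ [] //|_]; rewrite lexx ltW. Qed.

Lemma warp_invK s : s1 <= s <= s2 -> warp_inv (warp s) = s.
Proof. by move=> ss; apply: xget_unique => // t [ts e]; apply: warp_inj. Qed.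

Lemma warp_inv_s0 : warp_inv s0 = s1.
Proof. by have := warp_invK s1; rewrite warp_s1; apply; rewrite lexx ltW. Qed.

Lemma warp_inv_sf : warp_inv sf = s2.
Proof. by have := warp_invK s2; rewrite warp_s2; apply; rewrite lexx ltW. Qed.

Lemma warpK_inv u : s0 <= u <= sf -> warp (warp_inv u) = u.
Proof.
move=> uu; have [s ss su] : exists2 s, s \in `[s1, s2]%R & warp s = u.
  apply: IVT; [exact: ltW | exact/continuous_subspaceT/continuous_warp |].
  by rewrite warp_s1 warp_s2 (min_idPl (ltW s0_lt_sf)) (max_idPr (ltW s0_lt_sf)).
rewrite in_itv /= in ss.
pose P := [set t | s1 <= t <= s2 /\ warp t = u].
by have [] := xgetPex s1 (ex_intro P s (conj ss su)).
Qed.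

Lemma continuous_warp_inv : {within `[s0, sf], continuous warp_inv}.
Proof.
rewrite -warp_s1 -warp_s2; apply: segment_can_le_continuous (ltW s1_lt_s2) _ _.
  exact/continuous_subspaceT/continuous_warp.
by move=> s; rewrite in_itv /=; exact: warp_invK.
Qed.

Lemma warp_inv_itvoo {u} : s0 < u < sf -> s1 < warp_inv u < s2.
Proof.
move=> /andP[s0u usf]; have /andP[lo hi] := warp_inv_range u.
have e : warp (warp_inv u) = u by rewrite warpK_inv // !ltW.
rewrite !lt_neqAle lo hi !andbT; apply/andP; split; apply/eqP => ex.
  by move: s0u; rewrite -e -ex warp_s1 ltxx.
by move: usf; rewrite -e ex warp_s2 ltxx.
Qed.

Lemma is_derive_warp_inv u : s0 < u < sf ->
  is_derive u 1 warp_inv (warp_speed (warp_inv u))^-1.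
Proof.
move=> uu; have s_in := warp_inv_itvoo uu; have := s_in => /andP[s1s ss2].
rewrite warp_speed_in // -{1}(warpK_inv u); last by case/andP: uu => *; rewrite !ltW.
apply: is_derive_inverse.
- near=> t; apply: warp_invK; apply/andP; split; apply: ltW.
    by near: t; exact: lt_nbhsr.
  by near: t; exact: lt_nbhsl.
- by near=> t; exact: continuous_warp.
- exact: is_derive_warp.
- by rewrite mulf_neq0 ?gt_eqF ?warp_rate_gt0 // mulr_gt0 // subr_gt0.
Unshelve. all: by end_near. Qed.

End TimeChange.

Section RealAnalysis.
Context {R : realType}.
Implicit Types (f g : R -> R) (a b C x : R).

Lemma within_continuous_comp_within {A B : set R} {f g} :
  {within A, continuous f} -> (forall x, B x -> A (g x)) ->
  {within B, continuous g} -> {within B, continuous (f \o g)}.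
Proof.
move=> /subspace_continuousP cf gBA /subspace_continuousP cg.
apply/subspace_continuousP => x Bx.
have gA : g @ within B (nbhs x) --> within A (nbhs (g x)).
  move=> P /= /(cg x Bx (fun y => A y -> P y)); rewrite /= /within /=.
  apply: (@filterS _ (nbhs x) _ (fun y => B y -> A (g y) -> P (g y))).
  by move=> y gP By; exact: gP By (gBA y By).
by move=> P /(cf _ (gBA _ Bx)) /gA.
Qed.

Lemma ler_dist_derive_bound f df a b C : a <= b ->
  (forall x, x \in `]a, b[%R -> is_derive x 1 f (df x)) ->
  (forall x, x \in `]a, b[%R -> `|df x| <= C) ->
  {within `[a, b], continuous f} -> `|f b - f a| <= C * (b - a).
Proof.
case: (ltgtP a b) => // [ab|<-] _ fd dfC fc; last by rewrite !subrr normr0 mulr0.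
have [c cab ->] := MVT ab fd fc.
have ba : 0 < b - a by rewrite subr_gt0.
by rewrite normrM (gtr0_norm ba) ler_pM2r // dfC.
Qed.

Lemma is_derive0_flat {f x} C :
  (forall h, `|f (x + h) - f x| <= C * h ^+ 2) -> is_derive x 1 f 0.
Proof.
move=> flat.
suff quot0 : (fun h : R => h^-1 *: ((f \o shift x) (h *: 1) - f x)) @ 0^' --> 0.
  by apply: DeriveDef; [apply/cvg_ex; exists 0 | exact: cvg_lim].
apply/cvgrPdist_lt => e e0.
have eC : 0 < e / (`|C| + 1) by rewrite divr_gt0 // ltr_pwDr.
near=> h; have h0 : 0 < `|h| by rewrite normr_gt0; near: h; exact: nbhs_dnbhs_neq.
have he : `|h| < e / (`|C| + 1) by near: h; exact: dnbhs0_lt.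
rewrite sub0r normrN /= /GRing.scale /= mulr1 normrM normfV [h + x]addrC ltr_pdivrMl //.
apply: (le_lt_trans (flat h)); rewrite -(real_normK (num_real h)).
rewrite ltr_pdivlMr ?ltr_pwDr // in he.
have : C * `|h| ^+ 2 <= `|C| * `|h| ^+ 2 by rewrite ler_wpM2r ?sqr_ge0 ?ler_norm.
by nra.
Unshelve. all: by end_near. Qed.

End RealAnalysis.

Section ODESolution.
Context {R : realType} {m n : nat} {N : net R m n} {c : R} {x : 'cV[R]_m}.
Context {z0 : 'cV[R]_(n + 1)} {s0 sf : R} {z : R -> 'cV[R]_(n + 1)}.
Hypothesis z_sol : ode_sol N c x z0 s0 sf z.

Local Notation rhs s := (clamp_sol c (N x (z s) s).1 (N x (z s) s).2).

Lemma ode_sol_dist_le (a b C : R) i : s0 <= a -> a <= b -> b <= sf ->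
  (forall s, a < s < b -> `|rhs s i 0| <= C) -> `|z b i 0 - z a i 0| <= C * (b - a).
Proof.
have [_ [zc zd]] := z_sol; move=> s0a ab bsf rhsC.
apply: (@ler_dist_derive_bound _ (fun s => z s i 0) (fun s => rhs s i 0) a b C ab).
- move=> s; rewrite in_itv /= => /andP[sa sb]; apply: zd.
  by rewrite (le_lt_trans s0a sa) (lt_le_trans sb bsf).
- by move=> s; rewrite in_itv /= => sab; apply: rhsC.
- apply: continuous_subspaceW (zc i) => s /=; rewrite in_itv /= => /andP[sa sb].
  by rewrite (le_trans s0a sa) (le_trans sb bsf).
Qed.

Lemma ode_sol_lipschitz (a b : R) i : 0 <= c -> s0 <= a <= sf -> s0 <= b <= sf ->
  `|z b i 0 - z a i 0| <= c * `|b - a|.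
Proof.
move=> c0; wlog ab : a b / a <= b => [wlog_ab aa bb|/andP[s0a _] /andP[_ bsf]].
  case: (leP a b) => [ab|/ltW ba]; first exact: wlog_ab.
  by rewrite distrC (distrC b); apply: wlog_ab.
rewrite [`|b - a|]ger0_norm ?subr_ge0 //; apply: ode_sol_dist_le => // s _.
exact: clamp_sol_bound.
Qed.

Lemma ode_sol_const (a b : R) : s0 <= a -> a <= b -> b <= sf ->
  (forall s, a < s < b -> rhs s = 0) -> z b = z a.
Proof.
move=> s0a ab bsf rhs0; apply/matrixP => i j; rewrite (ord1 j); apply/eqP.
rewrite -subr_eq0 -normr_le0 -(mul0r (b - a)).
by apply: ode_sol_dist_le => // s /rhs0 ->; rewrite mxE normr0.
Qed.

End ODESolution.

Section WarpISD.
Context {R : realType} {D I : Type} {coord : I -> D -> R}.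
Variables (s0 s1 s2 sf : R) (t : D -> R).
Hypothesis poly_t : poly_fun coord t.

Lemma poly_fun_warp : poly_fun coord (fun z => warp s0 s1 s2 sf (t z)).
Proof.
have pt1 : poly_fun coord (fun z => t z - s1) by apply: PF_add poly_t (PF_const _ _).
apply: poly_fun_eq (PF_add (PF_const _ s0) (PF_mul (PF_const _ (warp_rate s0 s1 s2 sf))
  (PF_add (PF_mul (PF_const _ ((s2 - s1) / 2)) (poly_exp 2 pt1))
          (PF_mul (PF_const _ (- 1 / 3)) (poly_exp 3 pt1))))) _ => z.
by rewrite /warp; ring.
Qed.

Lemma isd_warp_speed : isd_fun coord (fun z => warp_speed s0 s1 s2 sf (t z)).
Proof.
have pt1 : poly_fun coord (fun z => t z - s1) by apply: PF_add poly_t (PF_const _ _).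
have pt2 : poly_fun coord (fun z => s2 - t z) by apply/PF_add/poly_opp/poly_t/PF_const.
exact/ISD_max/ISD_poly/PF_mul/PF_mul/pt2/pt1/PF_const/isd_const.
Qed.

End WarpISD.

Section Reparametrization.
Context {R : realType} {m n : nat}.
Variables (N1 : net R m n) (c1 s0 s1 s2 sf : R).

Local Notation warp := (warp s0 s1 s2 sf).
Local Notation warp_speed := (warp_speed s0 s1 s2 sf).
Local Notation coord := (@net_coord R m n).

Definition reparam_net : net R m n := fun x y s =>
  ((\det (N1 x y (warp s)).1)%:M,
   scaled_adj_rhs c1 (warp_speed s) (N1 x y (warp s)).1 (N1 x y (warp s)).2).

Definition reparam_bound : R := c1 * (warp_rate s0 s1 s2 sf * (s2 - s1) ^+ 2).

Lemma ISDnet_reparam_net : ISDnet N1 -> ISDnet reparam_net.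
Proof.
move=> [IM Ib]; pose h (z : net_dom R m n) := (z.1, warp z.2).
have poly_h k : poly_fun coord (fun z => net_coord k (h z)).
  case: k => [[i|j]|u]; [exact: (PF_coord _ (inl (inl i))) |
    exact: (PF_coord _ (inl (inr j))) | exact/poly_fun_warp/(PF_coord _ (inr u))].
pose M (z : net_dom R m n) := (N1 z.1.1 z.1.2 (warp z.2)).1.
pose b (z : net_dom R m n) := (N1 z.1.1 z.1.2 (warp z.2)).2.
have IM' : isd_mx coord M by move=> i j; exact (isd_fun_comp poly_h (IM i j)).
have Ib' : isd_mx coord b.
  by move=> i j; rewrite (ord1 j); exact (isd_fun_comp poly_h (Ib i)).
split; first exact/isd_mx_scalar/isd_det.
move=> i; apply: (@isd_fun_eq _ _ _ _ (fun z => warp_speed z.2 *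
    clamp (c1 * `|\det (M z)|) ((\adj (M z) *m b z) i 0))).
  apply/isd_mul; first exact/isd_warp_speed/(PF_coord _ (inr tt)).
  apply/isd_clamp; first exact/isd_mul/isd_norm/isd_det/IM'/isd_const.
  exact (isd_mx_mul (isd_mx_adj IM') Ib' i 0).
by move=> z; rewrite /= /scaled_adj_rhs [in RHS]mxE [in RHS]mxE.
Qed.

Hypotheses (c1_ge0 : 0 <= c1) (s0_lt_sf : s0 < sf) (s1_lt_s2 : s1 < s2).

Lemma reparam_bound_ge0 : 0 <= reparam_bound.
Proof.
by rewrite mulr_ge0 // mulr_ge0 ?sqr_ge0 // ltW // warp_rate_gt0.
Qed.

Lemma reparam_net_rhs_out x y s : ~ (s1 < s < s2) -> (reparam_net x y s).2 = 0.
Proof. by move=> s_out; rewrite /= /scaled_adj_rhs warp_speed_out // scale0r. Qed.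

Lemma clamp_sol_reparam_net x y s :
  clamp_sol reparam_bound (reparam_net x y s).1 (reparam_net x y s).2 =
  warp_speed s *: clamp_sol c1 (N1 x y (warp s)).1 (N1 x y (warp s)).2.
Proof. by apply: clamp_sol_scaled_adj => //; rewrite warp_speed_ge0 warp_speed_le. Qed.

End Reparametrization.

Section SolutionTransfer.
Context {R : realType} {m n : nat} {N1 : net R m n} {c1 s0 s1 s2 sf : R}.
Hypotheses (c1_ge0 : 0 <= c1) (s0_lt_s1 : s0 < s1) (s1_lt_s2 : s1 < s2).
Hypothesis s2_lt_sf : s2 < sf.
Context {x : 'cV[R]_m} {z0 : 'cV[R]_(n + 1)}.

Let s0_lt_sf : s0 < sf := lt_trans s0_lt_s1 (lt_trans s1_lt_s2 s2_lt_sf).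

Local Notation warp := (warp s0 s1 s2 sf).
Local Notation warp_speed := (warp_speed s0 s1 s2 sf).
Local Notation warp_ext := (warp_ext s0 s1 s2 sf).
Local Notation warp_inv := (warp_inv s0 s1 s2 sf).
Local Notation N2 := (reparam_net N1 c1 s0 s1 s2 sf).
Local Notation c2 := (reparam_bound c1 s0 s1 s2 sf).

Lemma ode_sol_warp_ext z : ode_sol N1 c1 x z0 s0 sf z ->
  ode_sol N2 c2 x z0 s0 sf (z \o warp_ext).
Proof.
move=> z_sol; have [z_s0 [zc zd]] := z_sol.
split; first by rewrite /= warp_ext_lo // ltW.
split.
  move=> i; apply: (within_continuous_comp_within (zc i)) => [s _|].
    exact: warp_ext_range.
  exact/continuous_subspaceT/continuous_warp_ext.
move=> s s_in i; rewrite clamp_sol_reparam_net // mxE.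
have [s_mid|s_out] := boolP (s1 < s < s2).
  have s_mid' : s1 <= s <= s2 by case/andP: s_mid => *; rewrite !ltW.
  rewrite warp_speed_in // mulrC /= warp_ext_mid //.
  apply: (@near_eq_is_derive _ _ _ ((fun u => z u i 0) \o warp)).
    have : \forall t \near s, t \in `]s1, s2[%R by apply: near_in_itvoo; rewrite in_itv.
    apply: filterS => t; rewrite in_itv /= => t_mid.
    by rewrite warp_ext_mid // !ltW //; case/andP: t_mid.
  by apply: is_derive1_comp; [apply: zd; exact: warp_itvoo | exact: is_derive_warp].
rewrite warp_speed_out //; last exact/negP.
rewrite mul0r.
apply: (is_derive0_flat (c1 * warp_flatness s0 s1 s2 sf)) => h.
rewrite -mulrA; apply: le_trans (ode_sol_lipschitz z_sol _ _ _ c1_ge0 _ _) _.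
- exact: warp_ext_range.
- exact: warp_ext_range.
- by rewrite ler_wpM2l //; apply: warp_ext_flat => //; exact/negP.
Qed.

Lemma ode_sol_reparam_flat {w} : ode_sol N2 c2 x z0 s0 sf w ->
  w s1 = w s0 /\ w sf = w s2.
Proof.
move=> w_sol.
have rhs_out s : ~ (s1 < s < s2) -> clamp_sol c2 (N2 x (w s) s).1 (N2 x (w s) s).2 = 0.
  by move=> s_out; rewrite clamp_sol_reparam_net // warp_speed_out // scale0r.
split.
- apply: (ode_sol_const w_sol _ _ (lexx _) (ltW s0_lt_s1)
    (ltW (lt_trans s1_lt_s2 s2_lt_sf))).
  move=> s /andP[_ ss1]; apply: rhs_out => /andP[s1s _].
  by have := lt_trans ss1 s1s; rewrite ltxx.
- apply: (ode_sol_const w_sol _ _ (ltW (lt_trans s0_lt_s1 s1_lt_s2)) (ltW s2_lt_sf)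
    (lexx _)).
  move=> s /andP[s2s _]; apply: rhs_out => /andP[_ ss2].
  by have := lt_trans ss2 s2s; rewrite ltxx.
Qed.

Lemma ode_sol_warp_inv {w} : ode_sol N2 c2 x z0 s0 sf w ->
  ode_sol N1 c1 x z0 s0 sf (w \o warp_inv) /\ w (warp_inv sf) = w sf.
Proof.
move=> w_sol; have [w_s0 [wc wd]] := w_sol.
have [w_s1 w_sf] := ode_sol_reparam_flat w_sol.
split; last by rewrite warp_inv_sf // w_sf.
split; first by rewrite /= warp_inv_s0 // w_s1.
split.
  move=> i; apply: (within_continuous_comp_within (wc i)) => [u _|].
    have /andP[lo hi] : s1 <= warp_inv u <= s2 by apply: warp_inv_range.
    by rewrite /= (le_trans (ltW s0_lt_s1) lo) (le_trans hi (ltW s2_lt_sf)).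
  by have := continuous_warp_inv _ _ _ _ s0_lt_sf s1_lt_s2; rewrite set_itvcc.
move=> u u_in i.
have /andP[s1v vs2] : s1 < warp_inv u < s2 by apply: warp_inv_itvoo.
have v_in : s0 < warp_inv u < sf by rewrite (lt_trans s0_lt_s1) // (lt_trans vs2).
have warp_v : warp (warp_inv u) = u.
  by apply: warpK_inv; rewrite // !ltW //; case/andP: u_in.
have := wd _ v_in i; rewrite clamp_sol_reparam_net // mxE warp_v => dw.
have := is_derive1_comp dw (is_derive_warp_inv _ _ _ _ s0_lt_sf s1_lt_s2 u u_in).
have speed_neq0 : warp_speed (warp_inv u) != 0.
  rewrite warp_speed_in ?s1v // mulf_neq0 ?gt_eqF ?warp_rate_gt0 //.
  by rewrite mulr_gt0 ?subr_gt0.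
by rewrite mulrC mulrA mulVf // mul1r.
Qed.

End SolutionTransfer.

Theorem mainTheorem10 (R : realType) (m n : nat) (N1 : net R m n) (c1 : R)
  (y0 : 'cV[R]_n) (t0 s0 s1 s2 sfinal : R) :
  ISDnet N1 -> 0 <= c1 -> s0 < s1 -> s1 < s2 -> s2 < sfinal ->
  exists (N2 : net R m n) (c2 : R),
    [/\ ISDnet N2, 0 <= c2,
      (forall x : 'cV[R]_m,
        ODESolve N1 c1 x (col_mx y0 (t0%:M : 'cV[R]_1)) s0 sfinal =
        ODESolve N2 c2 x (col_mx y0 (t0%:M : 'cV[R]_1)) s0 sfinal) &
      (forall (x : 'cV[R]_m) (yt : 'cV[R]_(n + 1)) (s : R),
        ~ (s1 <= s <= s2) -> (N2 x yt s).2 = 0)].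
Proof.
move=> N1_isd c1_ge0 s01 s12 s2f; have s0f := lt_trans s01 (lt_trans s12 s2f).
exists (reparam_net N1 c1 s0 s1 s2 sfinal), (reparam_bound c1 s0 s1 s2 sfinal).
split; [exact: ISDnet_reparam_net | exact: reparam_bound_ge0 | |].
- move=> x; apply/seteqP; split=> v [z [z_sol <-]].
  + exists (z \o warp_ext s0 s1 s2 sfinal); split; first exact: ode_sol_warp_ext.
    by rewrite /= warp_ext_hi // ltW.
  + have [w_sol w_sf] := ode_sol_warp_inv c1_ge0 s01 s12 s2f z_sol.
    by exists (z \o warp_inv s0 s1 s2 sfinal).
- move=> x yt s s_out; apply: reparam_net_rhs_out => // /andP[s1s ss2].
  by apply: s_out; rewrite !ltW.
Qed.
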